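(* Let $n\ge 2$ and let $P\in\mathrm{Mat}(n^2,\mathbb{C})$ be an orthogonal projection (i.e. $P^*=P$, $P^2=P$) of rank $r$. Put $P_1=P\otimes I_n$ and $P_2=I_n\otimes P$ in $\mathrm{Mat}(n^3,\mathbb{C})$. Then (a) $\operatorname{tr}_3(P_1P_2)\le rn$, and equality holds if and only if $P=0$ or $P=I_n\otimes I_n$; (b) $\operatorname{tr}_3\big((P_1P_2)^2\big)\le \operatorname{tr}_3(P_1P_2)$, and equality holds if and only if $P_1P_2=P_2P_1$.
   Context: $I_n$ is the $n\times n$ identity matrix, $\otimes$ is the Kronecker product, $P^*$ is the conjugate transpose, and $\operatorname{tr}_3$ denotes the ordinary matrix trace on $\mathrm{Mat}(n^3,\mathbb{C})$. *)

From mathcomp Require Import all_boot all_order all_algebra.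
From mathcomp Require Import algC.
From mathcomp Require Import mxtens.
Set Implicit Arguments. Unset Strict Implicit. Unset Printing Implicit Defensive.
Import Order.TTheory GRing.Theory Num.Theory.
Local Open Scope ring_scope.

(* Kronecker product: tensmx (A *t B) from mathcomp-real-closed's mxtens,
   with the standard lexicographic index convention (i1, i2) |-> i1 * m2 + i2. *)

Definition adjmx (m n : nat) (A : 'M[algC]_(m, n)) : 'M[algC]_(n, m) :=
  map_mx Num.conj A^T.

Definition orth_proj (N : nat) (P : 'M[algC]_N) : Prop :=
  adjmx P = P /\ P *m P = P.

Definition P1 (n : nat) (P : 'M[algC]_(n * n)) : 'M[algC]_(n * n * n) :=
  P *t (1%:M : 'M[algC]_n).

(* P2 = I_n (x) P  in Mat(n^3); the index set n*(n*n) is identified with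
   (n*n)*n (associativity of the Kronecker index convention). *)
Definition P2 (n : nat) (P : 'M[algC]_(n * n)) : 'M[algC]_(n * n * n) :=
  castmx (mulnA n n n, mulnA n n n) ((1%:M : 'M[algC]_n) *t P).

From mathcomp Require Import all_boot all_order all_algebra.
From mathcomp Require Import algC.
From mathcomp Require Import mxtens.
Import Order.TTheory GRing.Theory Num.Theory.
Local Open Scope ring_scope.
Set Implicit Arguments. Unset Strict Implicit. Unset Printing Implicit Defensive.

(* For orthogonal projections Q1, Q2 both defects are squared Frobenius norms:
     tr Q1 - tr (Q1 Q2) = |Q1 (1 - Q2)|^2,
     tr (Q1 Q2) - tr ((Q1 Q2)^2) = |Q1 Q2 (1 - Q1)|^2.
   This gives both inequalities; equality in the second means Q1 Q2 = Q1 Q2 Q1,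
   whose adjoint says Q2 Q1 = Q1 Q2.  Equality in the first means Q2 Q1 = Q1.
   For Q1 = P (x) I and Q2 = I (x) P, which have the same trace r n, equality
   in the first inequality for (Q1, Q2) gives it for (Q2, Q1) as well, hence
   P (x) I = I (x) P; comparing entries, P is a scalar projection, i.e. 0 or 1. *)

Lemma adjmx_mul m n p (A : 'M[algC]_(m, n)) (B : 'M[algC]_(n, p)) :
  adjmx (A *m B) = adjmx B *m adjmx A.
Proof. by rewrite /adjmx trmx_mul map_mxM. Qed.

Lemma adjmxB m n (A B : 'M[algC]_(m, n)) : adjmx (A - B) = adjmx A - adjmx B.
Proof. by apply/matrixP => i j; rewrite !mxE rmorphB. Qed.

Lemma adjmx1 m : adjmx (1%:M : 'M[algC]_m) = 1%:M.
Proof. by apply/matrixP => i j; rewrite !mxE rmorph_nat eq_sym. Qed.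

Lemma adjmx_tens m n p q (A : 'M[algC]_(m, n)) (B : 'M[algC]_(p, q)) :
  adjmx (A *t B) = adjmx A *t adjmx B.
Proof. by apply/matrixP => i j; rewrite !mxE rmorphM. Qed.

Lemma adjmx_cast m n m' n' (em : m = m') (en : n = n') (A : 'M[algC]_(m, n)) :
  adjmx (castmx (em, en) A) = castmx (en, em) (adjmx A).
Proof. by apply/matrixP => i j; rewrite !mxE !castmxE !mxE. Qed.

Lemma mxtrace_mul_adjE m n (A : 'M[algC]_(m, n)) :
  \tr (A *m adjmx A) = \sum_(ij : 'I_m * 'I_n) `|A ij.1 ij.2| ^+ 2.
Proof.
rewrite -(pair_bigA _ (fun i j => `|A i j| ^+ 2)).
by apply: eq_bigr => i _; rewrite mxE; apply: eq_bigr => j _; rewrite !mxE normCK.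
Qed.

Lemma mxtrace_mul_adj_ge0 m n (A : 'M[algC]_(m, n)) : 0 <= \tr (A *m adjmx A).
Proof. by rewrite mxtrace_mul_adjE sumr_ge0 // => ij _; rewrite exprn_ge0. Qed.

Lemma mxtrace_mul_adj_eq0 m n (A : 'M[algC]_(m, n)) :
  \tr (A *m adjmx A) = 0 -> A = 0.
Proof.
rewrite mxtrace_mul_adjE => /psumr_eq0P A0; apply/matrixP => i j.
have /eqP := A0 (fun ij _ => exprn_ge0 2 (normr_ge0 _)) (i, j) isT.
by rewrite expf_eq0 normr_eq0 mxE => /eqP.
Qed.

Lemma mxtrace_idem (F : fieldType) m (Q : 'M[F]_m) :
  Q *m Q = Q -> \tr Q = (\rank Q)%:R.
Proof.
move=> QQ; move: (row_base_free Q) (col_base_full Q) (mulmx_base Q).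
move: (row_base Q) (col_base Q) => R C Rfree Cfull QE.
have CR1 : R *m C = 1%:M.
  apply: (row_free_inj Rfree); rewrite mul1mx.
  apply: (row_full_inj Cfull).
  by rewrite !mulmxA QE -mulmxA QE QQ.
by rewrite -{1}QE mxtrace_mulC CR1 mxtrace1.
Qed.

Lemma mxtrace_cast (R : pzRingType) m m' (e : m = m') (A : 'M[R]_m) :
  \tr (castmx (e, e) A) = \tr A.
Proof. by case: m' / e; rewrite castmx_id. Qed.

Lemma castmx_mulmx (R : pzRingType) m m' (e : m = m') (A B : 'M[R]_m) :
  castmx (e, e) A *m castmx (e, e) B = castmx (e, e) (A *m B).
Proof. by case: m' / e; rewrite !castmx_id. Qed.

Lemma castmx1 (R : pzRingType) m m' (e : m = m') :
  castmx (e, e) (1%:M : 'M[R]_m) = 1%:M.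
Proof. by case: m' / e; rewrite castmx_id. Qed.

Lemma compl_idem (R : pzRingType) m (Q : 'M[R]_m) :
  Q *m Q = Q -> (1%:M - Q) *m (1%:M - Q) = 1%:M - Q.
Proof. by move=> QQ; rewrite mulmxBl !mulmxBr !mul1mx mulmx1 QQ subrr subr0. Qed.

Section TwoProjections.

Variables (N : nat) (Q1 Q2 : 'M[algC]_N).
Hypotheses (Q1P : orth_proj Q1) (Q2P : orth_proj Q2).

Lemma mxtrace_proj_defect :
  \tr Q1 - \tr (Q1 *m Q2) =
  \tr (Q1 *m (1%:M - Q2) *m adjmx (Q1 *m (1%:M - Q2))).
Proof.
case: Q1P Q2P => [h1 i1] [h2 i2].
rewrite adjmx_mul adjmxB adjmx1 h1 h2 mulmxA -(mulmxA Q1) compl_idem //.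
rewrite mulmxBr mulmx1 mulmxBl i1 raddfB /=.
by rewrite [\tr (Q1 *m Q2 *m Q1)]mxtrace_mulC mulmxA i1.
Qed.

Lemma mxtrace_proj_mul_defect :
  \tr (Q1 *m Q2) - \tr ((Q1 *m Q2) ^+ 2) =
  \tr (Q1 *m Q2 *m (1%:M - Q1) *m adjmx (Q1 *m Q2 *m (1%:M - Q1))).
Proof.
case: Q1P Q2P => [h1 i1] [h2 i2].
rewrite expr2 -[_ * _]/(_ *m _) !adjmx_mul adjmxB adjmx1 h1 h2.
rewrite !mulmxA -[in RHS](mulmxA (Q1 *m Q2)) compl_idem // mulmxBr mulmx1.
rewrite !mulmxBl -(mulmxA Q1 Q2 Q2) i2 raddfB /=.
rewrite [\tr (Q1 *m Q2 *m Q1)]mxtrace_mulC mulmxA i1.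
by rewrite [\tr (Q1 *m Q2 *m Q1 *m Q2 *m Q1)]mxtrace_mulC !mulmxA i1.
Qed.

Lemma mxtrace_proj_mul_le : \tr (Q1 *m Q2) <= \tr Q1.
Proof. by rewrite -subr_ge0 mxtrace_proj_defect mxtrace_mul_adj_ge0. Qed.

Lemma proj_absorb_of_mxtrace : \tr (Q1 *m Q2) = \tr Q1 -> Q2 *m Q1 = Q1.
Proof.
case: Q1P Q2P => [h1 _] [h2 _] trE.
have := mxtrace_proj_defect; rewrite trE subrr => /esym/mxtrace_mul_adj_eq0.
rewrite mulmxBr mulmx1 => /eqP; rewrite subr_eq0 => /eqP Q1E.
by rewrite -{1}h1 -{1}h2 -adjmx_mul -Q1E h1.
Qed.

Lemma mxtrace_proj_mul_sqr_le : \tr ((Q1 *m Q2) ^+ 2) <= \tr (Q1 *m Q2).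
Proof. by rewrite -subr_ge0 mxtrace_proj_mul_defect mxtrace_mul_adj_ge0. Qed.

Lemma mxtrace_proj_mul_sqr_eq :
  \tr ((Q1 *m Q2) ^+ 2) = \tr (Q1 *m Q2) <-> Q1 *m Q2 = Q2 *m Q1.
Proof.
case: Q1P Q2P => [h1 i1] [h2 i2]; split => [trE | Q12C].
  have := mxtrace_proj_mul_defect; rewrite trE subrr => /esym/mxtrace_mul_adj_eq0.
  rewrite mulmxBr mulmx1 => /eqP; rewrite subr_eq0 => /eqP Q12E.
  have := congr1 (@adjmx _ _) Q12E.
  by rewrite !adjmx_mul h1 h2 mulmxA => ->.
by rewrite expr2 -[_ * _]/(_ *m _) mulmxA -(mulmxA Q1) -Q12C mulmxA i1 -mulmxA i2.
Qed.

End TwoProjections.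

Lemma proj_eq_of_mxtrace N (Q1 Q2 : 'M[algC]_N) :
  orth_proj Q1 -> orth_proj Q2 ->
  \tr (Q1 *m Q2) = \tr Q1 -> \tr Q1 = \tr Q2 -> Q1 = Q2.
Proof.
move=> Q1P Q2P tr12 tr1E.
have Q21 := proj_absorb_of_mxtrace Q1P Q2P tr12.
have /(proj_absorb_of_mxtrace Q2P Q1P) Q12 : \tr (Q2 *m Q1) = \tr Q2.
  by rewrite mxtrace_mulC tr12.
case: Q1P Q2P => [h1 _] [h2 _].
by rewrite -Q21 -{1}h1 -{1}h2 -adjmx_mul Q12 h2.
Qed.

Local Notation ix a b := (mxtens_index (a, b)).

Lemma mxtens_index_eq m p (a c : 'I_m) (b d : 'I_p) :
  (ix a b == ix c d) = (a == c) && (b == d).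
Proof. by rewrite (can_eq (@mxtens_indexK m p)) xpair_eqE. Qed.

Lemma tensmx11 (R : pzRingType) m p :
  (1%:M : 'M[R]_m) *t (1%:M : 'M[R]_p) = 1%:M.
Proof.
apply/matrixP => i j.
case: (mxtens_indexP i) => a b; case: (mxtens_indexP j) => c d.
by rewrite tensmxE !mxE mxtens_index_eq -natrM mulnb.
Qed.

Lemma mxtrace_tensmx (R : pzRingType) m p (A : 'M[R]_m) (B : 'M[R]_p) :
  \tr (A *t B) = \tr A * \tr B.
Proof.
rewrite /mxtrace mulr_sum; apply: eq_bigr => i _.
by case: (mxtens_indexP i) => a b; rewrite tensmxE mxtens_indexK.
Qed.

Lemma idem_scalar_mx (F : fieldType) m (x : 'I_m) (a : F) :
  a%:M *m a%:M = a%:M :> 'M[F]_m -> a = 0 \/ a = 1.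
Proof.
move=> /(congr1 (fun A : 'M[F]_m => A x x)).
rewrite -scalar_mxM !mxE eqxx !mulr1n => /eqP.
rewrite -subr_eq0 -[X in _ - X]mulr1 -mulrBr mulf_eq0 subr_eq0.
by case/orP => /eqP; [left | right].
Qed.

Section Tensor.

Variables (n : nat) (P : 'M[algC]_(n * n)).

Lemma orth_proj_P1 : orth_proj P -> orth_proj (P1 P).
Proof.
case=> PA PP; rewrite /P1; split.
  by rewrite adjmx_tens PA adjmx1.
by rewrite tensmx_mul PP mulmx1.
Qed.

Lemma orth_proj_P2 : orth_proj P -> orth_proj (P2 P).
Proof.
case=> PA PP; rewrite /P2; split.
  by rewrite adjmx_cast adjmx_tens PA adjmx1.
by rewrite castmx_mulmx tensmx_mul mulmx1 PP.
Qed.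

Lemma mxtrace_P1 : P *m P = P -> \tr (P1 P) = (\rank P * n)%:R.
Proof. by move=> PP; rewrite mxtrace_tensmx (mxtrace_idem PP) mxtrace1 natrM. Qed.

Lemma mxtrace_P2 : P *m P = P -> \tr (P2 P) = (\rank P * n)%:R.
Proof.
move=> PP; rewrite mxtrace_cast mxtrace_tensmx (mxtrace_idem PP) mxtrace1.
by rewrite natrM mulrC.
Qed.

Lemma P1E a b k c d l :
  P1 P (ix (ix a b) k) (ix (ix c d) l) = P (ix a b) (ix c d) * (k == l)%:R.
Proof. by rewrite tensmxE mxE. Qed.

Lemma P2E a b k c d l :
  P2 P (ix (ix a b) k) (ix (ix c d) l) = (a == c)%:R * P (ix b k) (ix d l).
Proof.
have ixA x y z : cast_ord (esym (mulnA n n n)) (ix (ix x y) z) = ix x (ix y z).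
  by apply: val_inj => /=; rewrite mulnDl -mulnA addnA.
by rewrite castmxE !ixA tensmxE mxE.
Qed.

Hypothesis P1_eq_P2 : P1 P = P2 P.

Lemma scalar_of_P1_eq_P2 z : P = (P (ix z z) (ix z z))%:M.
Proof.
have E a b c d k l :
    P (ix a b) (ix c d) * (k == l)%:R = (a == c)%:R * P (ix b k) (ix d l).
  by rewrite -P1E -P2E P1_eq_P2.
apply/matrixP => x y.
case: (mxtens_indexP x) => a b; case: (mxtens_indexP y) => c d.
have := E a b c d z z; rewrite eqxx mulr1 => ->.
have := E b z d z z z; rewrite eqxx mulr1 => ->.
by rewrite mxE mxtens_index_eq mulrA -natrM mulnb mulr_natl.
Qed.

End Tensor.

Theorem lemma1 (n : nat) (P : 'M[algC]_(n * n)) (r : nat) :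
  (2 <= n)%N -> orth_proj P -> \rank P = r ->
  (* (a) *)
  (\tr (P1 P *m P2 P) <= (r * n)%:R
   /\ (\tr (P1 P *m P2 P) = (r * n)%:R <->
       P = 0 \/ P = (1%:M : 'M[algC]_n) *t (1%:M : 'M[algC]_n)))
  /\
  (* (b) *)
  (\tr ((P1 P *m P2 P) ^+ 2) <= \tr (P1 P *m P2 P)
   /\ (\tr ((P1 P *m P2 P) ^+ 2) = \tr (P1 P *m P2 P) <->
       P1 P *m P2 P = P2 P *m P1 P)).
Proof.
move=> n_ge2 Pproj rkP; have [_ Pidem] := Pproj.
have Q1P := orth_proj_P1 Pproj; have Q2P := orth_proj_P2 Pproj.
have tr1 : \tr (P1 P) = (r * n)%:R by rewrite -rkP mxtrace_P1.
have tr2 : \tr (P2 P) = (r * n)%:R by rewrite -rkP mxtrace_P2.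
split; split; rewrite -?tr1.
- exact: mxtrace_proj_mul_le.
- split=> [trE | [->|->]].
  + have z : 'I_n := Ordinal (ltnW n_ge2).
    have /scalar_of_P1_eq_P2/(_ z) PE :=
      proj_eq_of_mxtrace Q1P Q2P trE (etrans tr1 (esym tr2)).
    move: Pidem; rewrite PE tensmx11 => /(idem_scalar_mx (ix z z))[->|->].
      by left; rewrite raddf0.
    by right.
  + by rewrite /P1 tens0mx !mul0mx.
  + by rewrite /P2 !tensmx11 castmx1 mulmx1.
- exact: mxtrace_proj_mul_sqr_le.
- exact: mxtrace_proj_mul_sqr_eq.
Qed.
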